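(* For every integer $L\geq 0$, \[ \sum_{j=-\infty}^{\infty} \left(\frac{j}{3}\right) q^{\binom{j-1}{2}} {2L \brack L+j}_q =\begin{cases} \dfrac{(-1;q^3)_{L-1}}{(-1;q)_{L-1}}\, q^{L-1}\,\dfrac{1-q^3}{1-q}\,(1-q^L), & L>0,\\[2mm] 0, & L=0,\end{cases} \] where $\binom{j-1}{2}=\frac{(j-1)(j-2)}{2}$.
   Context: For a variable $a$ and integer $n\ge 0$, $(a;q)_n=(1-a)(1-aq)\cdots(1-aq^{n-1})$ (with $(a;q)_0=1$). The $q$-binomial coefficient is ${A \brack B}_q=\frac{(q;q)_A}{(q;q)_B(q;q)_{A-B}}$ if $0\le B\le A$ are integers, and $0$ otherwise. $\left(\frac{j}{3}\right)$ is the Legendre symbol modulo 3: it equals $1$ if $j\equiv 1 \pmod 3$, $-1$ if $j\equiv -1\pmod 3$, and $0$ if $3\mid j$. *)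

From HB Require Import structures.
From mathcomp Require Import all_boot all_order all_algebra.
Set Implicit Arguments. Unset Strict Implicit. Unset Printing Implicit Defensive.
Import Order.TTheory GRing.Theory Num.Theory.
Local Open Scope ring_scope.

Definition Fq : fieldType := {fraction {poly int}}.

Definition qvar : Fq := FracField.tofrac ('X : {poly int}).

Definition qpoch (F : fieldType) (a q : F) (n : nat) : F :=
  \prod_(i < n) (1 - a * q ^+ i).

Definition qbinom (F : fieldType) (q : F) (A B : int) : F :=
  if (0 <= B) && (B <= A) then
    qpoch q q `|A|%N / (qpoch q q `|B|%N * qpoch q q `|A - B|%N)
  else 0.

Definition leg3 (j : int) : int :=
  if (j %% 3)%Z == 1 then 1 else if (j %% 3)%Z == 2 then -1 else 0.

(* binom(j-1,2) = (j-1)(j-2)/2 (always a nonnegative integer) *)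
Definition binom2m1 (j : int) : int := (((j - 1) * (j - 2)) %/ 2)%Z.

Definition lhs_term (F : fieldType) (q : F) (L : nat) (j : int) : F :=
  (leg3 j)%:~R * q ^ (binom2m1 j) * qbinom q (2 * L)%N%:Z (L%:Z + j).

Definition lhs_partial (F : fieldType) (q : F) (L N : nat) : F :=
  \sum_(i < (2 * N).+1) lhs_term q L (i%:Z - N%:Z).

Definition rhs (F : fieldType) (q : F) (L : nat) : F :=
  if (0 < L)%N then
    qpoch (-1) (q ^+ 3) L.-1 / qpoch (-1) q L.-1 * q ^+ L.-1
      * ((1 - q ^+ 3) / (1 - q)) * (1 - q ^+ L)
  else 0.

From HB Require Import structures.
From mathcomp Require Import all_boot all_order all_algebra.
From mathcomp Require Import ring zify.
Set Implicit Arguments. Unset Strict Implicit. Unset Printing Implicit Defensive.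
Import Order.TTheory GRing.Theory Num.Theory.
Local Open Scope ring_scope.

(* Idea: the coefficient of X in X^m modulo X^2 + X + 1 is (m/3), so by
   Cauchy's q-binomial theorem the left-hand side is q^C(L+2,2) times the
   coefficient of X in X^(2L) (1 + q^(-L-1) X) ... (1 + q^(L-2) X) modulo
   X^2 + X + 1.  Modulo X^2 + X + 1, two factors with reciprocal coefficients
   combine as (1 + a X)(1 + X / a) = (a + 1/a - 1) X, and the product
   collapses to -D (1 + q^(-L-1) X)(1 + q^(-L) X)(1 + q^(-L+1) X), where
   D = prod_(i < L-1) (q^i + q^-i - 1) is (-1;q^3)_(L-1) / (-1;q)_(L-1) up to
   a power of q. *)

Lemma qpochS (F : fieldType) (a q : F) n :
  qpoch a q n.+1 = qpoch a q n * (1 - a * q ^+ n).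
Proof. by rewrite /qpoch big_ord_recr. Qed.

Section QBinomial.
Variables (F : fieldType) (q : F).
Hypothesis q_nroot1 : forall n, (0 < n)%N -> 1 - q ^+ n != 0.

Lemma qpoch_qqS n : qpoch q q n.+1 = qpoch q q n * (1 - q ^+ n.+1).
Proof. by rewrite qpochS exprS. Qed.

Lemma qpoch_neq0 n : qpoch q q n != 0.
Proof.
elim: n => [|n IH]; first by rewrite /qpoch big_ord0 oner_neq0.
by rewrite qpoch_qqS mulf_neq0 ?q_nroot1.
Qed.

Lemma qbinom_nat (n k : nat) : qbinom q n k =
  if (k <= n)%N then qpoch q q n / (qpoch q q k * qpoch q q (n - k)) else 0.
Proof. by rewrite /qbinom lez_nat /=; case: leqP => // kn; rewrite subzn. Qed.

Lemma qbinom_n0 (n : nat) : qbinom q n 0%N = 1 :> F.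
Proof. by rewrite qbinom_nat subn0 /qpoch big_ord0 mul1r divff ?qpoch_neq0. Qed.

Lemma qbinom_nn (n : nat) : qbinom q n n = 1 :> F.
Proof. by rewrite qbinom_nat leqnn subnn /qpoch big_ord0 mulr1 divff ?qpoch_neq0. Qed.

Lemma qbinom_gt (n k : nat) : (n < k)%N -> qbinom q n k = 0 :> F.
Proof. by rewrite qbinom_nat ltnNge => /negbTE ->. Qed.

Lemma qbinomS (n k : nat) : (k <= n)%N ->
  qbinom q n.+1 k.+1 = qbinom q n k.+1 + q ^+ (n - k) * qbinom q n k.
Proof.
rewrite leq_eqVlt => /predU1P [-> | kn].
  by rewrite !qbinom_nn qbinom_gt // subnn add0r mulr1.
rewrite !qbinom_nat ltnS kn (ltnW kn) subSS.
have [m ->] : exists m, n = (k + m.+1)%N by exists (n - k.+1)%N; lia.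
rewrite addKn addnS subSS addKn !qpoch_qqS.
have -> : q ^+ (k + m).+2 = q ^+ k.+1 * q ^+ m.+1 by rewrite -exprD addSn addnS.
have := qpoch_neq0 k; have := qpoch_neq0 m.
have := q_nroot1 (ltn0Sn k); have := q_nroot1 (ltn0Sn m).
by move=> h1 h2 h3 h4; field; rewrite h1 h2 h3 h4.
Qed.

Lemma qbinomial_prod (n : nat) (y : F) :
  \prod_(i < n) (1 + (q ^+ i * y)%:P * 'X) =
  \poly_(k < n.+1) (q ^+ 'C(k, 2) * qbinom q n k * y ^+ k).
Proof.
have coefE m i : (\poly_(k < m.+1) (q ^+ 'C(k, 2) * qbinom q m k * y ^+ k))`_i =
    q ^+ 'C(i, 2) * qbinom q m i * y ^+ i.
  by rewrite coef_poly; case: ltnP => // ?; rewrite qbinom_gt // mulr0 mul0r.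
elim: n => [|n IH]; apply/polyP => i.
  rewrite big_ord0 coefE coef1; case: i => [|i] /=.
    by rewrite qbinom_n0 !expr0 !mulr1.
  by rewrite qbinom_gt ?mulr0 ?mul0r.
rewrite big_ord_recr /= IH mulrDr mulr1 mulrCA coefD coefCM coefMX !coefE.
case: i => [|j] /=; first by rewrite !qbinom_n0 mulr0 addr0.
have [jn | nj] := leqP j n; last first.
  by rewrite !qbinom_gt ?(leqW nj) // !(mulr0, mul0r, add0r).
have -> : q ^+ n = q ^+ (n - j) * q ^+ j by rewrite -exprD subnK.
by rewrite qbinomS // binS bin1 exprD exprS; ring.
Qed.
End QBinomial.

Definition Phi3 {F : fieldType} : {poly F} := 'X^2 + 'X + 1.

Section ModPhi3.
Variable F : fieldType.

Lemma size_Phi3 : size (Phi3 : {poly F}) = 3%N.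
Proof. by rewrite /Phi3 -addrA size_polyDl ?size_polyXn // size_XaddC. Qed.

Lemma coef1_modPhi3 (p d : {poly F}) (r0 r1 : F) :
  p = d * Phi3 + (r1%:P * 'X + r0%:P) -> (p %% Phi3)`_1 = r1.
Proof.
move=> ->; rewrite modp_addl_mul_small; last first.
  by rewrite size_Phi3 size_MXaddC size_polyC; case: (_ && _); case: (r1 != 0).
by rewrite coefD coefMX !coefC addr0.
Qed.

Lemma modPhi3_Xn m : ('X^m : {poly F}) %% Phi3 = 'X^(m %% 3) %% Phi3.
Proof.
have X3 k : ('X^(k + 3) : {poly F}) %% Phi3 = 'X^k %% Phi3.
  have -> : ('X^(k + 3) : {poly F}) = 'X^k * ('X - 1) * Phi3 + 'X^k.
    by rewrite /Phi3 exprD; ring.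
  by rewrite modpD modp_mull add0r.
rewrite {1}(divn_eq m 3); elim: (m %/ 3)%N => [|a IH]; first by rewrite add0n.
by rewrite mulSn -addnA addnC X3.
Qed.

Lemma coef1_modPhi3_Xn m : (('X^m : {poly F}) %% Phi3)`_1 = (leg3 m)%:~R.
Proof.
rewrite modPhi3_Xn /leg3 modz_nat.
have : (m %% 3 < 3)%N by rewrite ltn_mod.
case: (m %% 3)%N => [|[|[|r]]] // _ /=.
- by apply: (coef1_modPhi3 (d := 0) (r0 := 1)); rewrite mul0r add0r mul0r add0r.
- by apply: (coef1_modPhi3 (d := 0) (r0 := 0)); rewrite mul0r add0r mul1r addr0.
- by apply: (coef1_modPhi3 (d := 1) (r0 := -1)); rewrite /Phi3 !polyCN; ring.
Qed.

Lemma coef1_modPhi3_XnM m N (c : nat -> F) :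
  (('X^m * \poly_(k < N) c k) %% Phi3)`_1 = \sum_(k < N) c k * (leg3 (k + m)%N)%:~R.
Proof.
rewrite poly_def mulr_sumr (big_morph _ (modpD Phi3) (mod0p _)) coef_sum.
by apply: eq_bigr => k _; rewrite -scalerAr modpZl coefZ -exprD addnC coef1_modPhi3_Xn.
Qed.

Lemma modPhi3_mul (p r s : {poly F}) :
  p %% Phi3 = r %% Phi3 -> (s * p) %% Phi3 = (s * r) %% Phi3.
Proof. by move=> pr; rewrite -modp_mul pr modp_mul. Qed.

Lemma modPhi3_X2 : ('X^2 : {poly F}) %% Phi3 = (- (1 + 'X)) %% Phi3.
Proof.
have -> : ('X^2 : {poly F}) = Phi3 - (1 + 'X) by rewrite /Phi3; ring.
by rewrite modpD modpp add0r.
Qed.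

Lemma modPhi3_X3 : ('X^3 : {poly F}) %% Phi3 = 1 %% Phi3.
Proof.
have -> : ('X^3 : {poly F}) = ('X - 1) * Phi3 + 1 by rewrite /Phi3; ring.
by rewrite modpD modp_mull add0r.
Qed.

Lemma modPhi3_pair (a b : F) : a * b = 1 ->
  ((1 + a%:P * 'X) * (1 + b%:P * 'X)) %% Phi3 = ((a + b - 1)%:P * 'X) %% Phi3.
Proof.
move=> ab; have -> : (1 + a%:P * 'X) * (1 + b%:P * 'X) =
    Phi3 + (a + b - 1)%:P * 'X + ((a * b)%:P - 1) * 'X^2.
  by rewrite /Phi3 polyCB polyCD polyCM; ring.
by rewrite ab subrr mul0r addr0 modpD modpp add0r.
Qed.

Lemma coef1_modPhi3_cubic (a b c : F) :
  (((1 + a%:P * 'X) * (1 + b%:P * 'X) * (1 + c%:P * 'X)) %% Phi3)`_1 =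
  (a + b + c) - (a * b + a * c + b * c).
Proof.
apply: (coef1_modPhi3 (d := (a * b * c)%:P * 'X + (a * b + a * c + b * c - a * b * c)%:P)
  (r0 := 1 - (a * b + a * c + b * c) + a * b * c)).
by rewrite /Phi3 !(polyCD, polyCB, polyCM, polyC1); ring.
Qed.
End ModPhi3.

Section PairedProduct.
Variables (F : fieldType) (Q : F).
Hypothesis Q_neq0 : Q != 0.
Local Notation lin j := (1 + (Q ^ j)%:P * 'X : {poly F}).

Lemma modPhi3_prod (n : nat) :
  ('X^(2 * n.+1) * \prod_(i < 2 * n.+1) lin (i%:Z - n.+2%:Z)) %% Phi3 =
  (- (\prod_(i < n) (Q ^+ i + Q ^- i - 1))%:P *
     (lin (- n.+2%:Z) * lin (- n.+1%:Z) * lin (- n%:Z))) %% Phi3.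
Proof.
elim: n => [|n IH].
  rewrite !big_ord_recr !big_ord0 /= mul1r sub0r oppr0 expr0z polyC1 mul1r.
  have -> : 1%:Z - 2%:Z = - 1%:Z by [].
  by rewrite mulrC (modPhi3_mul _ (modPhi3_X2 F)); congr (_ %% _); ring.
have -> : (2 * n.+2 = (2 * n.+1).+2)%N by rewrite mulnS.
rewrite big_ord_recl big_ord_recr /= sub0r.
rewrite (eq_bigr (fun i : 'I_(2 * n.+1) => lin (i%:Z - n.+2%:Z))); last first.
  by move=> i _; rewrite /bump leq0n add1n; congr (1 + (Q ^ _)%:P * 'X); lia.
have -> : (bump 0 (2 * n.+1))%:Z - n.+3%:Z = n%:Z by rewrite /bump leq0n add1n; lia.
(* The step adds the outer factors with exponents -n-3 and n; the latter pairs off with -n. *)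
set M := \prod_(i < _) _.
have -> : 'X^((2 * n.+1).+2) * (lin (- n.+3%:Z) * (M * lin n)) =
    ('X^2 * lin (- n.+3%:Z) * lin n) * ('X^(2 * n.+1) * M).
  by rewrite -addn2 exprD; ring.
rewrite (modPhi3_mul _ IH) -exprnP -[Q ^ (- n%:Z)]exprnN.
set D := \prod_(i < n) _; set G := lin (- n.+3%:Z) * lin (- n.+2%:Z) * lin (- n.+1%:Z).
have -> : 'X^2 * lin (- n.+3%:Z) * (1 + (Q ^+ n)%:P * 'X) *
    (- D%:P * (lin (- n.+2%:Z) * lin (- n.+1%:Z) * (1 + (Q ^- n)%:P * 'X))) =
    (- D%:P * G * 'X^2) * ((1 + (Q ^+ n)%:P * 'X) * (1 + (Q ^- n)%:P * 'X)).
  by rewrite /G; ring.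
rewrite (modPhi3_mul _ (modPhi3_pair _)) ?mulfV ?expf_neq0 //.
have -> : - D%:P * G * 'X^2 * ((Q ^+ n + Q ^- n - 1)%:P * 'X) =
    (- (D * (Q ^+ n + Q ^- n - 1))%:P * G) * 'X^3.
  by rewrite polyCM; ring.
by rewrite (modPhi3_mul _ (modPhi3_X3 F)) mulr1 big_ord_recr.
Qed.
End PairedProduct.

Lemma sum_centered_trunc (V : nmodType) (L N : nat) (f : int -> V) : (L <= N)%N ->
  (forall j : int, (j < - L%:Z) || (L%:Z < j) -> f j = 0) ->
  \sum_(i < (2 * N).+1) f (i%:Z - N%:Z) = \sum_(k < (2 * L).+1) f (k%:Z - L%:Z).
Proof.
move=> LN f_out.
rewrite -!(big_mkord xpredT (fun i => f (i%:Z - _))).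
rewrite (big_cat_nat _ (n := (N - L)%N)) //=; last by lia.
rewrite (big_cat_nat _ (m := (N - L)%N) (n := (N - L + (2 * L).+1)%N)) //=; [|lia|lia].
rewrite [X in X + _]big1_seq ?add0r; last first.
  by move=> i /andP [_]; rewrite mem_index_iota => /andP [? ?]; apply: f_out; lia.
rewrite [X in _ + X]big1_seq ?addr0; last first.
  by move=> i /andP [_]; rewrite mem_index_iota => /andP [? ?]; apply: f_out; lia.
rewrite -{1}(add0n (N - L)%N) big_addn addKn.
by apply: eq_bigr => i _; congr f; lia.
Qed.

Lemma binom2m1_shift (k L : nat) :
  binom2m1 (k%:Z - L%:Z) = ('C(k, 2) + 'C(L.+2, 2))%N%:Z - (k * L.+1)%N%:Z.
Proof.
have bin2_twice m : ('C(m, 2) * 2 + m = m * m)%N.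
  by elim: m => [|m IH] //; rewrite binS bin1; nia.
rewrite /binom2m1; have := bin2_twice k; have := bin2_twice L.+2 => h1 h2.
have -> : (k%:Z - L%:Z - 1) * (k%:Z - L%:Z - 2) =
   (('C(k, 2) + 'C(L.+2, 2))%N%:Z - (k * L.+1)%N%:Z) * 2 by lia.
by rewrite mulzK.
Qed.

Lemma leg3_addM3 (j : int) (m : nat) : leg3 (j + (m * 3)%N%:Z) = leg3 j.
Proof. by rewrite /leg3 addrC PoszM modzMDl. Qed.

Section ClosedForm.
Variables (F : fieldType) (q : F).
Hypothesis q_neq0 : q != 0.
Hypothesis q_nroot1 : forall n, (0 < n)%N -> 1 - q ^+ n != 0.
Hypothesis q_pow_neqN1 : forall n, 1 + q ^+ n != 0.

Lemma lhs_term_out (L : nat) (j : int) :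
  (j < - L%:Z) || (L%:Z < j) -> lhs_term q L j = 0.
Proof.
move=> j_out; rewrite /lhs_term /qbinom ifF ?mulr0 //.
by apply/negbTE/negP => /andP [? ?]; move: j_out; lia.
Qed.

Lemma lhs_term_shift (L k : nat) : (k <= 2 * L)%N ->
  lhs_term q L (k%:Z - L%:Z) = q ^+ 'C(L.+2, 2) *
    (q ^+ 'C(k, 2) * qbinom q (2 * L)%N k * (q ^ (- L.+1%:Z)) ^+ k * (leg3 (k + 2 * L)%N)%:~R).
Proof.
move=> kL; rewrite /lhs_term binom2m1_shift (addrC L%:Z) subrK.
have -> : (k + 2 * L)%N%:Z = k%:Z - L%:Z + (L * 3)%N%:Z by lia.
have -> : - (k * L.+1)%N%:Z = - L.+1%:Z * k%:Z by lia.
rewrite leg3_addM3 PoszD !expfzDr // -exprz_exp -!exprnP; ring.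
Qed.

Lemma lhs_partial_modPhi3 (L N : nat) : (L <= N)%N ->
  lhs_partial q L N = q ^+ 'C(L.+2, 2) *
    (('X^(2 * L) * \prod_(i < 2 * L) (1 + (q ^ (i%:Z - L.+1%:Z))%:P * 'X)) %% Phi3)`_1.
Proof.
move=> LN; rewrite /lhs_partial (sum_centered_trunc LN (@lhs_term_out L)).
rewrite (eq_bigr _ (fun (k : 'I_(2 * L).+1) _ => lhs_term_shift (ltn_ord k))) -mulr_sumr.
rewrite (eq_bigr (fun i : 'I_(2 * L) => 1 + (q ^+ i * q ^ (- L.+1%:Z))%:P * 'X)).
  by rewrite qbinomial_prod // coef1_modPhi3_XnM.
by move=> i _; rewrite exprnP -expfzDr.
Qed.

Lemma prod_qsym_qpoch (n : nat) : \prod_(i < n) (q ^+ i + q ^- i - 1) =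
  q ^- 'C(n, 2) * (qpoch (-1) (q ^+ 3) n / qpoch (-1) q n).
Proof.
have qsymE i : q ^+ i + q ^- i - 1 =
    q ^- i * ((1 - (-1) * q ^+ 3 ^+ i) / (1 - (-1) * q ^+ i)).
  rewrite -exprM mulnC exprM !mulN1r !opprK.
  have := q_pow_neqN1 i; have : q ^+ i != 0 by rewrite expf_neq0.
  by move: (q ^+ i) => x x0 x1; field; rewrite x0 x1.
rewrite (eq_bigr _ (fun (i : 'I_n) _ => qsymE i)) big_split /= prodf_div prodfV prodrXr.
by rewrite -(big_mkord xpredT (fun i => i)) bin2_sum.
Qed.

Lemma lhs_partial_eq_rhs (L N : nat) : (L <= N)%N -> lhs_partial q L N = rhs q L.
Proof.
move=> LN; rewrite lhs_partial_modPhi3 //; case: L LN => [|n] _.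
  by rewrite big_ord0 mulr1 coef1_modPhi3_Xn mulr0.
rewrite (modPhi3_prod q_neq0) -polyCN [(- _)%:P * _]mul_polyC modpZl coefZ coef1_modPhi3_cubic.
rewrite prod_qsym_qpoch /rhs /= -!exprnN.
have -> : 'C(n.+3, 2) = ('C(n, 2) + n * 3 + 3)%N by rewrite !binS !bin1 !bin0; lia.
have : 1 - q != 0 by rewrite -[q]expr1 q_nroot1.
have : q ^+ 'C(n, 2) != 0 by rewrite expf_neq0.
have : q ^+ n != 0 by rewrite expf_neq0.
rewrite !exprD exprM !exprS expr0 mulr1.
move: (q ^+ n) (q ^+ 'C(n, 2)) (qpoch _ _ n / _) => x y R x0 y0 q1.
by field; rewrite x0 y0 q1 q_neq0.
Qed.
End ClosedForm.

Lemma qvarX n : qvar ^+ n = FracField.tofrac ('X^n : {poly int}).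
Proof. by rewrite /qvar rmorphXn. Qed.

Lemma qvar_neq0 : qvar != 0.
Proof. by rewrite /qvar tofrac_eq0 polyX_eq0. Qed.

Lemma qvar_nroot1 n : (0 < n)%N -> 1 - qvar ^+ n != 0.
Proof.
move=> n0; rewrite qvarX -(rmorph1 (@FracField.tofrac _)) -rmorphB tofrac_eq0 subr_eq0.
by apply/eqP => /(congr1 (size : {poly int} -> nat)); rewrite size_polyXn size_poly1; case: n n0.
Qed.

Lemma qvar_pow_neqN1 n : 1 + qvar ^+ n != 0.
Proof.
rewrite qvarX -(rmorph1 (@FracField.tofrac _)) -rmorphD tofrac_eq0.
apply/eqP => /(congr1 (fun p : {poly int} => p.[1])).
by rewrite hornerD hornerXn expr1n hornerC horner0.
Qed.

Theorem theorem2p1 (L : nat) :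
  forall N : nat, (L <= N)%N -> lhs_partial qvar L N = rhs qvar L.
Proof. exact: lhs_partial_eq_rhs qvar_neq0 qvar_nroot1 qvar_pow_neqN1 L. Qed.
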